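(* Let $F$ be an infinite family of index sets linearly ordered by $\subseteq$ such that $I_1\subsetneq I_2$ in $F$ implies $I_2\setminus I_1$ is infinite, and let $\mathcal{T}_F=\{T_I\mid I\in F\}$. Let $J$ be an index set with $T_J\notin\mathcal{T}_F$. Then $T_J\in\mathrm{Cl}_E(\mathcal{T}_F)$ if and only if $J$ is an (upper or lower) accumulation point for some infinite $F'\subseteq F$.
   Context: A predicate symbol $R$ is non-empty for a theory $T$ if $T\vdash\exists\bar x R(\bar x)$, empty otherwise. A complete theory $T$ in a predicate language is language uniform (LU) if for each arity $m$, every permutation of the set of $m$-ary symbols non-empty for $T$ preserves $T$. Let $T_0$ be a complete LU-theory in a relational language $\Sigma_0$, let $n\ge1$, and let $\{R_k\mid k\in I_0\}$, $I_0$ infinite, be the set of $n$-ary symbols of $\Sigma_0$ that are non-empty for $T_0$. Let $\Sigma'=\{R_k\mid k\in I_0\}\cup\{$symbols of $\Sigma_0$ of arity $\neq n\}$. An index set is an infinite $I\subseteq I_0$ with $|I|=|I_0|$ and $|I_0\setminus I|$ equal to the number of $n$-ary symbols of $\Sigma_0$ that are empty for $T_0$. For an index set $I$, $T_I$ is the complete $\Sigma'$-theory axiomatized by the restriction of $T_0$ to the language $\{R_k\mid k\in I\}\cup\{$symbols of arity $\ne n\}$ together with $\{\forall\bar x\neg R_l(\bar x)\mid l\in I_0\setminus I\}$. $E$-closure (over $\Sigma'$): let $E$ be a new binary symbol. The $E$-combination of a family $(\mathcal{A}_i)_i$ of $\Sigma'$-structures with disjoint universes is the $(\Sigma'\cup\{E\})$-structure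 on $\bigcup_iA_i$ with $E$ the equivalence relation whose classes are the $A_i$ and each $R\in\Sigma'$ interpreted as $\bigcup_iR^{\mathcal{A}_i}$. For a set $\mathcal{T}$ of complete $\Sigma'$-theories, $\mathrm{Cl}_E(\mathcal{T})$ is the set of complete theories of the $E$-classes (as induced $\Sigma'$-structures) of structures elementarily equivalent to some $E$-combination of structures whose theories lie in $\mathcal{T}$. For infinite $F'\subseteq F$: $\bigcup F'$ is the upper accumulation point of $F'$ if $\bigcup F'\notin F'$, and $\bigcap F'$ is the lower accumulation point of $F'$ if $\bigcap F'\notin F'$. *)

From Stdlib Require Import List Arith.
Import ListNotations.
Set Implicit Arguments.

Section FOL.
Variable Sy : Type.
Variable ar : Sy -> nat.

Inductive form : Type :=
| Fatom : Sy -> list nat -> form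
| Feq : nat -> nat -> form
| Fneg : form -> form
| Fand : form -> form -> form
| Fex : nat -> form -> form.

Record structure : Type := Struct { dom : Type; rel : Sy -> list dom -> Prop }.

Definition upd (M : structure) (a : nat -> dom M) (x : nat) (d : dom M) : nat -> dom M :=
  fun y => if Nat.eqb y x then d else a y.

Fixpoint sat (M : structure) (a : nat -> dom M) (p : form) : Prop :=
  match p with
  | Fatom R vs => rel M R (map a vs)
  | Feq x y => a x = a y
  | Fneg q => ~ sat M a q
  | Fand q r => sat M a q /\ sat M a r
  | Fex x q => exists d, sat M (upd M a x d) q
  end.

Fixpoint free (z : nat) (p : form) : Prop :=
  match p with
  | Fatom _ vs => In z vs
  | Feq x y => z = x \/ z = y
  | Fneg q => free z q
  | Fand q r => free z q \/ free z r
  | Fex x q => z <> x /\ free z q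
  end.

Fixpoint in_lang (L : Sy -> Prop) (p : form) : Prop :=
  match p with
  | Fatom R vs => L R /\ length vs = ar R
  | Feq _ _ => True
  | Fneg q => in_lang L q
  | Fand q r => in_lang L q /\ in_lang L r
  | Fex _ q => in_lang L q
  end.

Definition sentence_in (L : Sy -> Prop) (p : form) : Prop :=
  in_lang L p /\ forall z, ~ free z p.

Definition Th (L : Sy -> Prop) (M : structure) : form -> Prop :=
  fun p => sentence_in L p /\ forall a, sat M a p.

(* (semantic) consequence; by Goedel's completeness this is |- *)
Definition entails (T : form -> Prop) (p : form) : Prop :=
  forall M : structure, inhabited (dom M) ->
    (forall q, T q -> forall a, sat M a q) -> forall a, sat M a p.

Definition complete_theory (L : Sy -> Prop) (T : form -> Prop) : Prop :=
  exists M : structure, inhabited (dom M) /\ forall p, T p <-> Th L M p.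

Definition elem_equiv (L : Sy -> Prop) (M N : structure) : Prop :=
  forall p, sentence_in L p -> ((forall a, sat M a p) <-> (forall a, sat N a p)).

Fixpoint ex_vars (xs : list nat) (p : form) : form :=
  match xs with [] => p | x :: xs' => Fex x (ex_vars xs' p) end.

Definition exR (R : Sy) : form := ex_vars (seq 0 (ar R)) (Fatom R (seq 0 (ar R))).

Definition nonempty_for (T : form -> Prop) (R : Sy) : Prop := entails T (exR R).

Fixpoint rename (s : Sy -> Sy) (p : form) : form :=
  match p with
  | Fatom R vs => Fatom (s R) vs
  | Feq x y => Feq x y
  | Fneg q => Fneg (rename s q)
  | Fand q r => Fand (rename s q) (rename s r)
  | Fex x q => Fex x (rename s q)
  end.

Definition bijective (s : Sy -> Sy) : Prop :=
  (forall x y, s x = s y -> x = y) /\ (forall y, exists x, s x = y).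

Definition LU (T : form -> Prop) : Prop :=
  forall (m : nat) (s : Sy -> Sy), bijective s ->
    (forall R, ~ (ar R = m /\ nonempty_for T R) -> s R = R) ->
    (forall R, ar R = m /\ nonempty_for T R -> ar (s R) = m /\ nonempty_for T (s R)) ->
    forall p, T p <-> T (rename s p).

End FOL.

Arguments Fatom {Sy}. Arguments Feq {Sy}. Arguments Fneg {Sy}.
Arguments Fand {Sy}. Arguments Fex {Sy}.

Definition subset {X} (A B : X -> Prop) := forall x, A x -> B x.
Definition setD {X} (A B : X -> Prop) := fun x => A x /\ ~ B x.
Definition ext_eq {X} (A B : X -> Prop) := forall x, A x <-> B x.
Definition infinite {X} (A : X -> Prop) := forall l : list X, exists x, A x /\ ~ In x l.
Definition equipotent {X} (A B : X -> Prop) :=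
  exists f : {x | A x} -> {x | B x},
    (forall u v, f u = f v -> u = v) /\ (forall w, exists u, f u = w).
Definition infinite_family {X} (F : (X -> Prop) -> Prop) :=
  forall l : list (X -> Prop), exists I, F I /\ forall I', In I' l -> ~ ext_eq I I'.
Definition bigcup {X} (F : (X -> Prop) -> Prop) : X -> Prop := fun x => exists I, F I /\ I x.
Definition bigcap {X} (F : (X -> Prop) -> Prop) : X -> Prop := fun x => forall I, F I -> I x.
Definition upper_acc {X} (F : (X -> Prop) -> Prop) (J : X -> Prop) :=
  ext_eq J (bigcup F) /\ ~ (exists I, F I /\ ext_eq I (bigcup F)).
Definition lower_acc {X} (F : (X -> Prop) -> Prop) (J : X -> Prop) :=
  ext_eq J (bigcap F) /\ ~ (exists I, F I /\ ext_eq I (bigcap F)).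

Section Setting.
Variables (S : Type) (ar : S -> nat) (T0 : form S -> Prop) (n : nat).

(* I0 : the n-ary symbols non-empty for T0 (indices identified with symbols) *)
Definition I0 : S -> Prop := fun R => ar R = n /\ nonempty_for ar T0 R.
Definition emptyn : S -> Prop := fun R => ar R = n /\ ~ nonempty_for ar T0 R.
Definition Sigma' : S -> Prop := fun R => I0 R \/ ar R <> n.

Definition is_index (I : S -> Prop) : Prop :=
  subset I I0 /\ infinite I /\ equipotent I I0 /\ equipotent (setD I0 I) emptyn.

Definition LangI (I : S -> Prop) : S -> Prop := fun R => I R \/ ar R <> n.

Definition AxI (I : S -> Prop) : form S -> Prop := fun p =>
  (sentence_in ar (LangI I) p /\ T0 p) \/
  (exists l, I0 l /\ ~ I l /\ p = Fneg (exR ar l)).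

Definition TI (I : S -> Prop) : form S -> Prop := fun p =>
  sentence_in ar Sigma' p /\ entails (AxI I) p.

(* language with the new binary symbol E = None *)
Definition arE (o : option S) : nat := match o with None => 2 | Some R => ar R end.
Definition SigmaE (o : option S) : Prop := match o with None => True | Some R => Sigma' R end.

Definition Ecomb (K : Type) (A : K -> structure S) : structure (option S) :=
  {| dom := {k : K & dom (A k)};
     rel := fun o l => match o with
       | None => match l with [x; y] => projT1 x = projT1 y | _ => False end
       | Some R => exists k (l' : list (dom (A k))),
                     l = map (existT (fun k => dom (A k)) k) l' /\ rel (A k) R l'
       end |}.

Definition Eclass (D : structure (option S)) (c : dom D) : structure S :=
  {| dom := {x : dom D | rel D None [x; c]};
     rel := fun R l => rel D (Some R) (map (@proj1_sig _ _) l) |}.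

Definition ClE (Tset : (form S -> Prop) -> Prop) (T : form S -> Prop) : Prop :=
  exists (K : Type) (A : K -> structure S) (D : structure (option S)) (c : dom D),
    inhabited K /\ (forall k, inhabited (dom (A k))) /\
    (forall k, exists T', Tset T' /\ ext_eq (Th ar Sigma' (A k)) T') /\
    elem_equiv arE SigmaE (Ecomb A) D /\
    ext_eq T (Th ar Sigma' (Eclass D c)).

Definition TF (F : (S -> Prop) -> Prop) : (form S -> Prop) -> Prop :=
  fun T => exists I, F I /\ T = TI I.

End Setting.

(* Write M_I for a model M of T0 in which the n-ary symbols outside I are made empty; its
   Sigma'-theory is T_I.  T_J lies in the E-closure of {T_I | I in F} exactly when every finite
   set of symbols is decided by some I in F as by J.  If so, adjoin one class M_J to the
   E-combination of countably many copies of each M_I: a sentence mentions finitely many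
   symbols, on which J agrees with some I in F, and the extra class is absorbed by shifting
   the copies of M_I, so the theory does not change.  Conversely, the finite diagram of J
   holds in the E-class, so its relativization holds in the combination, hence in some M_I,
   and that I agrees with J on the diagram.  For a chain F not containing J, such finite
   agreement means that J is the union of the members of F below J or the intersection of
   those above it, and a union or intersection of a chain that is not attained is taken over
   infinitely many sets. *)

From Stdlib Require Import List Arith Lia Classical ClassicalEpsilon FunctionalExtensionality ProofIrrelevance Eqdep.
Import ListNotations.
Set Implicit Arguments.

Lemma map_injective {A B} (f : A -> B) :
  (forall u v, f u = f v -> u = v) -> forall l1 l2, map f l1 = map f l2 -> l1 = l2.
Proof.
  intros Hf; induction l1 as [|x l1 IH]; destruct l2 as [|y l2]; simpl; intros H;
    try discriminate; auto.
  injection H as H1 H2. f_equal; auto.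
Qed.

Lemma map_nth_seq0 {A} (l : list A) d : map (fun z => nth z l d) (seq 0 (length l)) = l.
Proof.
  induction l as [|x l IH]; simpl; auto. f_equal.
  rewrite <- seq_shift, map_map. exact IH.
Qed.

Lemma list_max_ge z l : In z l -> z <= list_max l.
Proof.
  intro H. assert (Hle := proj1 (list_max_le l (list_max l)) (le_n _)).
  rewrite Forall_forall in Hle. auto.
Qed.

Lemma sig_proj1_inj {A} (P : A -> Prop) (u v : {x | P x}) : proj1_sig u = proj1_sig v -> u = v.
Proof. apply eq_sig_hprop. intros; apply proof_irrelevance. Qed.

Section Semantics.
Variable Sy : Type.

Fixpoint atoms (p : form Sy) : list (Sy * list nat) :=
  match p with
  | Fatom R vs => [(R, vs)]
  | Feq _ _ => []
  | Fneg q => atoms q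
  | Fand q r => atoms q ++ atoms r
  | Fex _ q => atoms q
  end.

Fixpoint vars (p : form Sy) : list nat :=
  match p with
  | Fatom _ vs => vs
  | Feq y z => [y; z]
  | Fneg q => vars q
  | Fand q r => vars q ++ vars r
  | Fex y q => y :: vars q
  end.

Lemma upd_map (N1 N2 : structure Sy) (h : dom N1 -> dom N2) a x d :
  (fun z => h (upd N1 a x d z)) = upd N2 (fun z => h (a z)) x (h d).
Proof. apply functional_extensionality; intro z; unfold upd; now destruct (Nat.eqb z x). Qed.

Lemma sat_transport (N1 N2 : structure Sy) (h : dom N1 -> dom N2) (h' : dom N2 -> dom N1)
  (hh' : forall y, h (h' y) = y) (h'h : forall x, h' (h x) = x) p :
  (forall R vs, In (R, vs) (atoms p) -> forall l, length l = length vs ->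
     (rel N1 R l <-> rel N2 R (map h l))) ->
  forall a, sat N1 a p <-> sat N2 (fun z => h (a z)) p.
Proof.
  induction p; simpl; intros Hat a.
  - rewrite <- (map_map a h). apply (Hat s l (or_introl eq_refl)). apply length_map.
  - split; intro E; [now rewrite E|]. now rewrite <- (h'h (a n)), <- (h'h (a n0)), E.
  - rewrite IHp; tauto.
  - rewrite IHp1, IHp2; [tauto| |]; intros R vs Hin; apply Hat; auto using in_or_app.
  - split; intros [d Hd].
    + exists (h d). rewrite IHp in Hd by auto. now rewrite upd_map in Hd.
    + exists (h' d). rewrite IHp by auto. now rewrite upd_map, hh'.
Qed.

Lemma sat_agree (M : structure Sy) p : forall a a', (forall z, free z p -> a z = a' z) ->
  (sat M a p <-> sat M a' p).
Proof.
  induction p; simpl; intros a a' E.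
  - rewrite (map_ext_in a a' l); [tauto|]. intros z Hz; apply E; exact Hz.
  - rewrite (E n), (E n0); auto; tauto.
  - rewrite (IHp a a'); auto; tauto.
  - rewrite (IHp1 a a'), (IHp2 a a'); auto; tauto.
  - assert (K : forall d, sat M (upd M a n d) p <-> sat M (upd M a' n d) p).
    { intro d; apply IHp. intros z Hz; unfold upd; destruct (Nat.eqb_spec z n); auto. }
    split; intros [d Hd]; exists d; apply K; exact Hd.
Qed.

Lemma sat_closed (M : structure Sy) p a a' : (forall z, ~ free z p) -> sat M a p -> sat M a' p.
Proof. intros H; apply sat_agree; intros z Hz; destruct (H z Hz). Qed.

Lemma sat_ex_vars_intro (M : structure Sy) xs : forall a (b : nat -> dom M) q,
  (forall z, ~ In z xs -> b z = a z) -> sat M b q -> sat M a (ex_vars xs q).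
Proof.
  induction xs as [|x xs IH]; simpl; intros a b q E Hb.
  - rewrite <- (sat_agree M q b a); auto.
  - exists (b x). apply IH with b; auto. intros z Hz. unfold upd.
    destruct (Nat.eqb_spec z x); subst; auto. apply E. intros [|]; auto.
Qed.

Lemma sat_ex_vars_elim (M : structure Sy) xs : forall a q,
  sat M a (ex_vars xs q) -> exists b, sat M b q.
Proof.
  induction xs as [|x xs IH]; simpl; intros a q H; eauto.
  destruct H as [d Hd]; eauto.
Qed.

Lemma free_ex_vars xs : forall z (q : form Sy), free z (ex_vars xs q) -> ~ In z xs /\ free z q.
Proof.
  induction xs as [|x xs IH]; simpl; intros z q H; auto.
  destruct H as [H1 H2]. apply IH in H2. destruct H2. split; auto. intros [|]; auto.
Qed.

Lemma atoms_ex_vars xs (q : form Sy) : atoms (ex_vars xs q) = atoms q.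
Proof. induction xs; simpl; auto. Qed.

Lemma in_lang_ex_vars ar (L : Sy -> Prop) xs (q : form Sy) :
  in_lang ar L (ex_vars xs q) <-> in_lang ar L q.
Proof. induction xs; simpl; tauto. Qed.

Lemma in_lang_atoms ar (L : Sy -> Prop) (p : form Sy) :
  in_lang ar L p -> forall R vs, In (R, vs) (atoms p) -> L R /\ length vs = ar R.
Proof.
  induction p; simpl; intros H R vs Hin.
  - destruct Hin as [E|[]]. inversion E; subst; auto.
  - destruct Hin.
  - auto.
  - apply in_app_or in Hin. destruct H; destruct Hin; eauto.
  - auto.
Qed.

Lemma in_lang_mono ar (L L' : Sy -> Prop) p :
  (forall R, L R -> L' R) -> in_lang ar L p -> in_lang ar L' p.
Proof. intros E; induction p; simpl; firstorder. Qed.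

Variable ar : Sy -> nat.

Lemma exR_sentence (L : Sy -> Prop) R : L R -> sentence_in ar L (exR ar R).
Proof.
  intro HL. split.
  - apply in_lang_ex_vars. simpl. split; auto. apply length_seq.
  - intros z H. apply free_ex_vars in H. simpl in H. tauto.
Qed.

Lemma sat_exR_intro (M : structure Sy) a R l : length l = ar R -> rel M R l -> sat M a (exR ar R).
Proof.
  intros Hl Hr. unfold exR.
  apply sat_ex_vars_intro with (b := fun z => if z <? length l then nth z l (a 0) else a z).
  - intros z Hz. destruct (Nat.ltb_spec z (length l)); auto.
    exfalso; apply Hz. apply in_seq; lia.
  - simpl. rewrite <- Hl. rewrite (map_ext_in _ (fun z => nth z l (a 0))).
    + now rewrite map_nth_seq0.
    + intros z Hz. apply in_seq in Hz. destruct (Nat.ltb_spec z (length l)); [reflexivity|lia].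
Qed.

Lemma sat_exR_elim (M : structure Sy) a R :
  sat M a (exR ar R) -> exists l, length l = ar R /\ rel M R l.
Proof.
  intro H. apply sat_ex_vars_elim in H. destruct H as [b Hb].
  exists (map b (seq 0 (ar R))). split; auto. now rewrite length_map, length_seq.
Qed.

End Semantics.
Section Relativization.
Variable Sy : Type.

Fixpoint relativize (x : nat) (p : form Sy) : form (option Sy) :=
  match p with
  | Fatom R vs => Fatom (Some R) vs
  | Feq y z => Feq y z
  | Fneg q => Fneg (relativize x q)
  | Fand q r => Fand (relativize x q) (relativize x r)
  | Fex y q => Fex y (Fand (Fatom None [y; x]) (relativize x q))
  end.

Lemma free_relativize x (p : form Sy) z : free z (relativize x p) -> z = x \/ free z p.
Proof.
  induction p; simpl; auto; intros H.
  - destruct H; [destruct (IHp1 H)|destruct (IHp2 H)]; auto.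
  - destruct H as [H1 [[H|[H|[]]]|H]]; subst; auto; [tauto|]. destruct (IHp H); auto.
Qed.

Lemma in_lang_relativize ar x (L : Sy -> Prop) (p : form Sy) : in_lang ar L p ->
  in_lang (fun o => match o with None => 2 | Some R => ar R end)
          (fun o => match o with None => True | Some R => L R end) (relativize x p).
Proof. induction p; simpl; tauto. Qed.

Lemma sat_relativize_Eclass (D : structure (option Sy)) (c : dom D) x (p : form Sy) :
  ~ In x (vars p) -> forall (b : nat -> dom (Eclass D c)) (a : nat -> dom D),
  a x = c -> (forall z, z <> x -> a z = proj1_sig (b z)) ->
  (sat (Eclass D c) b p <-> sat D a (relativize x p)).
Proof.
  induction p; simpl; intros Hx b a Hax Hab.
  - replace (map a l) with (map (@proj1_sig _ _) (map b l)); [tauto|].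
    rewrite map_map. apply map_ext_in. intros z Hz. symmetry; apply Hab. intro; subst; auto.
  - rewrite (Hab n), (Hab n0) by (intro; subst; auto). split; intro E.
    + now rewrite E.
    + now apply sig_proj1_inj.
  - rewrite (IHp Hx b a); tauto.
  - rewrite (IHp1 (fun h => Hx (in_or_app _ _ _ (or_introl h))) b a),
            (IHp2 (fun h => Hx (in_or_app _ _ _ (or_intror h))) b a); auto; tauto.
  - assert (Hnx : n <> x) by (intro; subst; auto).
    assert (Hx' : ~ In x (vars p)) by auto.
    assert (E1 : forall e, upd D a n e n = e) by (intro; unfold upd; now rewrite Nat.eqb_refl).
    assert (E2 : forall e, upd D a n e x = c).
    { intro; unfold upd. destruct (Nat.eqb_spec x n); [congruence|auto]. }
    assert (Eupd : forall d z, z <> x ->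
              upd D a n (proj1_sig d) z = proj1_sig (upd (Eclass D c) b n d z)).
    { intros d z Hz. unfold upd. destruct (Nat.eqb_spec z n); auto. }
    split.
    + intros [d Hd]. exists (proj1_sig d). rewrite E1, E2. split; [exact (proj2_sig d)|].
      rewrite <- (IHp Hx' (upd (Eclass D c) b n d)); auto.
    + intros [e [He Hs]]. rewrite E1, E2 in He. exists (exist _ e He).
      rewrite (IHp Hx' _ (upd D a n e)); auto. apply (Eupd (exist _ e He)).
Qed.

Lemma sat_relativize_Ecomb K (A : K -> structure Sy) k x (p : form Sy) :
  ~ In x (vars p) -> (forall R vs, In (R, vs) (atoms p) -> vs <> []) ->
  forall (b : nat -> dom (A k)) (a : nat -> dom (Ecomb A)),
  projT1 (a x) = k -> (forall z, z <> x -> a z = existT _ k (b z)) ->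
  (sat (A k) b p <-> sat (Ecomb A) a (relativize x p)).
Proof.
  induction p; simpl; intros Hx Hne b a Hax Hab.
  - assert (Em : map a l = map (existT (fun k => dom (A k)) k) (map b l)).
    { rewrite map_map. apply map_ext_in. intros z Hz. apply Hab. intro; subst; auto. }
    rewrite Em. split.
    + intro H. exists k, (map b l). auto.
    + intros [k' [l' [E H]]]. destruct l as [|v l].
      { destruct (Hne s [] (or_introl eq_refl)); auto. }
      destruct l' as [|w l']; [discriminate|].
      assert (Eh := f_equal (fun l => match l with [] => None | u :: _ => Some (projT1 u) end) E).
      simpl in Eh. injection Eh as Ek. subst k'.
      apply map_injective in E; [now rewrite E|].
      intros u v' Huv; exact (inj_pairT2 _ _ _ _ _ Huv).
  - rewrite (Hab n), (Hab n0) by (intro; subst; auto). split; intro E.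
    + now rewrite E.
    + exact (inj_pairT2 _ _ _ _ _ E).
  - rewrite (IHp Hx Hne b a); tauto.
  - rewrite (IHp1 (fun h => Hx (in_or_app _ _ _ (or_introl h)))
                  (fun R vs h => Hne R vs (in_or_app _ _ _ (or_introl h))) b a),
            (IHp2 (fun h => Hx (in_or_app _ _ _ (or_intror h)))
                  (fun R vs h => Hne R vs (in_or_app _ _ _ (or_intror h))) b a); auto; tauto.
  - assert (Hnx : n <> x) by (intro; subst; auto).
    assert (Hx' : ~ In x (vars p)) by auto.
    assert (E1 : forall e, upd (Ecomb A) a n e n = e) by (intro; unfold upd; now rewrite Nat.eqb_refl).
    assert (E2 : forall e, upd (Ecomb A) a n e x = a x).
    { intro; unfold upd. destruct (Nat.eqb_spec x n); [congruence|auto]. }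
    assert (Eupd : forall d z, z <> x ->
              upd (Ecomb A) a n (existT _ k d) z = existT _ k (upd (A k) b n d z)).
    { intros d z Hz. unfold upd. destruct (Nat.eqb_spec z n); auto. }
    split.
    + intros [d Hd]. exists (existT _ k d). cbn. rewrite E1, E2. split; [simpl; auto|].
      rewrite <- (IHp Hx' Hne (upd (A k) b n d)); auto. now rewrite E2.
    + intros [e [He Hs]]. cbn in He. rewrite E1, E2 in He. destruct e as [k' d]. simpl in He.
      rewrite Hax in He. subst k'. exists d.
      rewrite (IHp Hx' Hne (upd (A k) b n d) (upd (Ecomb A) a n (existT _ k d))); auto.
      now rewrite E2.
Qed.

End Relativization.
Section Chains.
Variable X : Type.

Definition chain (G : (X -> Prop) -> Prop) : Prop :=
  forall I1 I2, G I1 -> G I2 -> subset I1 I2 \/ subset I2 I1.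

Definition approximates (F : (X -> Prop) -> Prop) (J : X -> Prop) : Prop :=
  forall L : list X, exists I, F I /\ forall x, In x L -> (I x <-> J x).

Lemma chain_sub (F G : (X -> Prop) -> Prop) : chain F -> subset G F -> chain G.
Proof. intros HF HGF I1 I2 H1 H2. apply HF; auto. Qed.

Lemma chain_upper_bound (G : (X -> Prop) -> Prop) {I1 I2} : chain G -> G I1 -> G I2 ->
  exists I, G I /\ subset I1 I /\ subset I2 I.
Proof.
  intros HG H1 H2. destruct (HG _ _ H1 H2) as [h|h].
  - exists I2. repeat split; auto. intros x; auto.
  - exists I1. repeat split; auto. intros x; auto.
Qed.

Lemma chain_lower_bound (G : (X -> Prop) -> Prop) {I1 I2} : chain G -> G I1 -> G I2 ->
  exists I, G I /\ subset I I1 /\ subset I I2.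
Proof.
  intros HG H1 H2. destruct (HG _ _ H1 H2) as [h|h].
  - exists I1. repeat split; auto. intros x; auto.
  - exists I2. repeat split; auto. intros x; auto.
Qed.

Section FiniteChain.
Variable le : (X -> Prop) -> (X -> Prop) -> Prop.
Hypothesis le_trans : forall I1 I2 I3, le I1 I2 -> le I2 I3 -> le I1 I3.
Hypothesis le_ext : forall I1 I2, ext_eq I1 I2 -> le I1 I2.

Lemma finite_chain_greatest (l : list (X -> Prop)) : forall G : (X -> Prop) -> Prop,
  (forall I1 I2, G I1 -> G I2 -> le I1 I2 \/ le I2 I1) -> (exists I, G I) ->
  (forall I, G I -> exists I', In I' l /\ ext_eq I I') ->
  exists g, G g /\ forall I, G I -> le I g.
Proof.
  induction l as [|I' l IH]; intros G HG [I0 H0] Hl.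
  { destruct (Hl I0 H0) as [? [[] _]]. }
  set (G' := fun I => G I /\ ~ ext_eq I I').
  destruct (classic (exists I, G' I)) as [HG'|HG'].
  - destruct (IH G') as [g' [[Hg' _] Hmax']]; auto.
    + intros I1 I2 [H1 _] [H2 _]; auto.
    + intros I [HI HnI]. destruct (Hl I HI) as [I'' [[<-|Hin] E]]; [contradiction|eauto].
    + destruct (classic (exists I, G I /\ ext_eq I I')) as [[I1 [HI1 E1]]|Hno].
      * assert (Hto1 : forall I, G I -> ext_eq I I' -> le I I1).
        { intros I HI E. apply le_ext. intro x. rewrite (E x). symmetry. apply E1. }
        destruct (HG _ _ HI1 Hg') as [h|h].
        -- exists g'. split; auto. intros I HI.
           destruct (classic (ext_eq I I')); eauto. apply Hmax'. split; auto.
        -- exists I1. split; auto. intros I HI.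
           destruct (classic (ext_eq I I')); auto. eapply le_trans; [|exact h].
           apply Hmax'. split; auto.
      * exists g'. split; auto. intros I HI. apply Hmax'. split; auto.
        intro E. apply Hno; eauto.
  - exists I0. split; auto. intros I HI.
    assert (E : forall J, G J -> ext_eq J I') by
      (intros J HJ; apply NNPP; intro C; apply HG'; exists J; split; auto).
    apply le_ext. intro x. rewrite (E I HI x). symmetry. apply (E I0 H0).
Qed.

End FiniteChain.

Lemma not_infinite_family (G : (X -> Prop) -> Prop) : ~ infinite_family G ->
  exists l, forall I, G I -> exists I', In I' l /\ ext_eq I I'.
Proof.
  intro H. apply NNPP; intro C. apply H. intro l. apply NNPP; intro C'.
  apply C. exists l. intros I HI. apply NNPP; intro C''. apply C'. exists I.
  split; auto. intros I' Hin E. apply C''. eauto.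
Qed.

Lemma infinite_family_of_no_max (G : (X -> Prop) -> Prop) : chain G -> (exists I, G I) ->
  ~ (exists I, G I /\ ext_eq I (bigcup G)) -> infinite_family G.
Proof.
  intros HG Hne Hno. apply NNPP; intro Hfin. apply not_infinite_family in Hfin as [l Hl].
  destruct (@finite_chain_greatest subset (fun I1 I2 I3 h1 h2 x hx => h2 x (h1 x hx))
              (fun I1 I2 (E : ext_eq I1 I2) x => proj1 (E x)) l G HG Hne Hl) as [g [Hg Hmax]].
  apply Hno. exists g. split; auto. intro x. split.
  - intro hx. exists g; auto.
  - intros [I [HI hx]]. exact (Hmax I HI x hx).
Qed.

Lemma infinite_family_of_no_min (G : (X -> Prop) -> Prop) : chain G -> (exists I, G I) ->
  ~ (exists I, G I /\ ext_eq I (bigcap G)) -> infinite_family G.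
Proof.
  intros HG Hne Hno. apply NNPP; intro Hfin. apply not_infinite_family in Hfin as [l Hl].
  destruct (@finite_chain_greatest (fun I1 I2 => subset I2 I1)
              (fun I1 I2 I3 h1 h2 x hx => h1 x (h2 x hx))
              (fun I1 I2 (E : ext_eq I1 I2) x => proj2 (E x)) l G (fun I1 I2 H1 H2 => proj1 (or_comm _ _) (HG _ _ H1 H2))
              Hne Hl) as [g [Hg Hmin]].
  apply Hno. exists g. split; auto. intro x. split.
  - intros hx I HI. exact (Hmin I HI x hx).
  - intro hx. exact (hx g Hg).
Qed.

Lemma approximates_sub (F F' : (X -> Prop) -> Prop) J :
  subset F' F -> approximates F' J -> approximates F J.
Proof. intros HF' H L. destruct (H L) as [I [HI HL]]. eauto. Qed.

Lemma upper_acc_approximates (G : (X -> Prop) -> Prop) J : chain G -> (exists I, G I) ->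
  upper_acc G J -> approximates G J.
Proof.
  intros HG [I0 H0] [HJ _] L.
  assert (K : exists I, G I /\ forall x, In x L -> J x -> I x).
  { induction L as [|y L [I1 [H1 H1']]]; [exists I0; split; [auto|intros x []]|].
    destruct (classic (J y)) as [Jy|nJy].
    - destruct (proj1 (HJ y) Jy) as [I2 [H2 H2y]].
      destruct (chain_upper_bound HG H1 H2) as [I [HI [S1 S2]]].
      exists I. split; auto. intros x [<-|Hin] Hx; auto.
    - exists I1. split; auto. intros x [<-|Hin] Hx; [contradiction|auto]. }
  destruct K as [I [HI HI']]. exists I. split; auto. intros x Hx. split; auto.
  intro h. apply HJ. exists I; auto.
Qed.

Lemma lower_acc_approximates (G : (X -> Prop) -> Prop) J : chain G -> (exists I, G I) ->
  lower_acc G J -> approximates G J.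
Proof.
  intros HG [I0 H0] [HJ _] L.
  assert (K : exists I, G I /\ forall x, In x L -> ~ J x -> ~ I x).
  { induction L as [|y L [I1 [H1 H1']]]; [exists I0; split; [auto|intros x []]|].
    destruct (classic (J y)) as [Jy|nJy].
    - exists I1. split; auto. intros x [<-|Hin] Hx; [contradiction|auto].
    - assert (E : exists I2, G I2 /\ ~ I2 y).
      { apply NNPP; intro C. apply nJy, HJ. intros I2 H2. apply NNPP; intro C2. eauto. }
      destruct E as [I2 [H2 H2y]].
      destruct (chain_lower_bound HG H1 H2) as [I [HI [S1 S2]]].
      exists I. split; auto. intros x [<-|Hin] Hx hx; [exact (H2y (S2 _ hx))|].
      exact (H1' x Hin Hx (S1 _ hx)). }
  destruct K as [I [HI HI']]. exists I. split; auto. intros x Hx. split.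
  - intro h. apply NNPP; intro C. exact (HI' x Hx C h).
  - intro h. exact (proj1 (HJ x) h I HI).
Qed.

Section Approximated.
Variables (F : (X -> Prop) -> Prop) (J : X -> Prop).
Hypotheses (HF : chain F) (HJ : approximates F J).

Lemma approximates_comparable I : F I -> subset I J \/ subset J I.
Proof.
  intro HI. apply NNPP; intro C. apply not_or_and in C as [C1 C2].
  apply not_all_ex_not in C1 as [a Ha]. apply not_all_ex_not in C2 as [b Hb].
  assert (Ia : I a) by tauto. assert (nJa : ~ J a) by tauto.
  assert (Jb : J b) by tauto. assert (nIb : ~ I b) by tauto.
  destruct (HJ [a; b]) as [I' [HI' HA]].
  assert (nI'a : ~ I' a) by (rewrite (HA a); simpl; auto).
  assert (I'b : I' b) by (apply (HA b); simpl; auto).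
  destruct (HF HI HI') as [h|h]; [exact (nI'a (h a Ia))|exact (nIb (h b I'b))].
Qed.

Hypothesis HJnot : ~ (exists I, F I /\ ext_eq I J).

Definition below : (X -> Prop) -> Prop := fun I => F I /\ subset I J.
Definition above : (X -> Prop) -> Prop := fun I => F I /\ subset J I.

Lemma below_upper_acc : (exists x, J x) -> subset J (bigcup below) ->
  infinite_family below /\ upper_acc below J.
Proof.
  intros [x Jx] HU.
  assert (HJU : ext_eq J (bigcup below)).
  { intro y. split; [apply HU|]. intros [I [[_ h] hy]]. auto. }
  assert (Hno : ~ (exists I, below I /\ ext_eq I (bigcup below))).
  { intros [I [[HI _] E]]. apply HJnot. exists I. split; auto.
    intro y. rewrite (E y). symmetry. apply HJU. }
  split; [|split; auto].
  apply infinite_family_of_no_max; auto.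
  - apply (chain_sub HF). intros I []; auto.
  - destruct (HU x Jx) as [I [HI _]]. eauto.
Qed.

Lemma above_lower_acc b : J b -> ~ bigcup below b ->
  infinite_family above /\ lower_acc above J.
Proof.
  intros Jb Hb.
  assert (Hsep : forall L, exists I, above I /\ forall x, In x L -> ~ J x -> ~ I x).
  { intro L. destruct (HJ (b :: L)) as [I [HI HA]].
    assert (Ib : I b) by (apply (HA b); simpl; auto).
    exists I. split.
    - split; auto. destruct (approximates_comparable HI) as [h|h]; auto.
      exfalso. apply Hb. exists I. repeat split; auto.
    - intros x Hx nJx Ix. apply nJx, (HA x); simpl; auto. }
  assert (HJC : ext_eq J (bigcap above)).
  { intro x. split; [intros Jx I [_ h]; auto|].
    intro h. apply NNPP; intro nJx. destruct (Hsep [x]) as [I [HI HIx]].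
    exact (HIx x (or_introl eq_refl) nJx (h I HI)). }
  assert (Hno : ~ (exists I, above I /\ ext_eq I (bigcap above))).
  { intros [I [[HI _] E]]. apply HJnot. exists I. split; auto.
    intro y. rewrite (E y). symmetry. apply HJC. }
  split; [|split; auto].
  apply infinite_family_of_no_min; auto.
  - apply (chain_sub HF). intros I []; auto.
  - destruct (Hsep []) as [I [HI _]]. eauto.
Qed.

Lemma approximates_accumulation : (exists x, J x) ->
  exists F', subset F' F /\ infinite_family F' /\ (upper_acc F' J \/ lower_acc F' J).
Proof.
  intros Hne. destruct (classic (subset J (bigcup below))) as [HU|HU].
  - destruct (below_upper_acc Hne HU) as [Hinf Hacc].
    exists below. repeat split; auto. intros I []; auto.
  - apply not_all_ex_not in HU as [b Hb].
    assert (Jb : J b) by tauto. assert (nb : ~ bigcup below b) by tauto.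
    destruct (above_lower_acc Jb nb) as [Hinf Hacc].
    exists above. repeat split; auto. intros I []; auto.
Qed.

End Approximated.
End Chains.

Section EClosure.
Variables (S : Type) (ar : S -> nat) (T0 : form S -> Prop) (n : nat).
Variables (K : Type) (A : K -> structure S) (D : structure (option S)).
Hypothesis HK : inhabited K.
Hypothesis HA : forall k, inhabited (dom (A k)).
Hypothesis HD : elem_equiv (arE ar) (SigmaE ar T0 n) (Ecomb A) D.

Lemma elem_equiv_E_refl (c : dom D) : rel D None [c; c].
Proof.
  set (refl := @Fneg (option S) (Fex 0 (Fneg (Fatom None [0; 0])))).
  assert (Hrefl : sentence_in (arE ar) (SigmaE ar T0 n) refl).
  { split; [simpl; auto|]. simpl. intros z [H1 [H2|[H2|[]]]]; congruence. }
  assert (HE : sat D (fun _ => c) refl).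
  { apply (proj1 (HD Hrefl)). intros a [d Hd]. apply Hd. reflexivity. }
  apply NNPP; intro C. apply HE. now exists c.
Qed.

Lemma Eclass_sentence_component (c : dom D) p :
  sentence_in ar (Sigma' ar T0 n) p -> (forall R vs, In (R, vs) (atoms p) -> vs <> []) ->
  (forall b, sat (Eclass D c) b p) -> exists k (b : nat -> dom (A k)), sat (A k) b p.
Proof.
  intros [Hl Hc] Hne Hp.
  set (x := Datatypes.S (list_max (vars p))).
  assert (Hx : ~ In x (vars p)) by (intro H; apply list_max_ge in H; unfold x in H; lia).
  set (psi := Fex x (relativize x p)).
  assert (Hpsi : sentence_in (arE ar) (SigmaE ar T0 n) psi).
  { split; [exact (@in_lang_relativize S ar x _ p Hl)|].
    intros z [Hzx Hz]. apply free_relativize in Hz as [Hz|Hz]; [contradiction|exact (Hc z Hz)]. }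
  assert (HDpsi : sat D (fun _ => c) psi).
  { exists c. apply (@sat_relativize_Eclass S D c x p Hx
                       (fun _ => exist _ c (elem_equiv_E_refl c))).
    - unfold upd. now rewrite Nat.eqb_refl.
    - intros z Hz. unfold upd. destruct (Nat.eqb_spec z x); [contradiction|reflexivity].
    - apply Hp. }
  destruct HK as [k0]. destruct (HA k0) as [y0].
  destruct (proj2 (HD Hpsi) (fun a => @sat_closed _ D psi _ a (proj2 Hpsi) HDpsi) (fun _ => existT _ k0 y0))
    as [[k y] Hky].
  exists k, (fun _ => y).
  apply (@sat_relativize_Ecomb S K A k x p Hx Hne _ (fun _ => existT _ k y)); auto.
  revert Hky. apply sat_agree. intros z Hz.
  apply free_relativize in Hz as [->|Hz]; [|destruct (Hc z Hz)].
  unfold upd. now rewrite Nat.eqb_refl.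
Qed.

End EClosure.

Lemma TI_ext S ar T0 n (I J : S -> Prop) :
  ext_eq I J -> ext_eq (TI ar T0 n I) (TI ar T0 n J).
Proof.
  assert (AxI_ext : forall I J : S -> Prop, ext_eq I J ->
            forall q, AxI ar T0 n I q -> AxI ar T0 n J q).
  { intros I' J' E q [[[Hl Hc] Hq]|[l [H1 [H2 H3]]]].
    - left. split; [split; [|exact Hc]|exact Hq]. apply in_lang_mono with (2 := Hl).
      intros R [h|h]; [left; apply E; auto|right; auto].
    - right. exists l. split; [exact H1|split; [|exact H3]]. intro h; apply H2, E, h. }
  intros E p; unfold TI; split; intros [Hs H]; split; auto; intros N HN HAx; apply H; auto;
    intros q Hq; apply HAx; eapply AxI_ext; eauto. intro x; symmetry; apply E.
Qed.

Section Models.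
Variables (S : Type) (ar : S -> nat) (T0 : form S -> Prop) (n : nat) (M : structure S).
Hypothesis HM : inhabited (dom M).
Hypothesis HT : forall p, T0 p <-> Th ar (fun _ => True) M p.

Definition restrict_model (I : S -> Prop) : structure S :=
  @Struct S (dom M) (fun R l => rel M R l /\ (ar R = n -> I R)).

Definition ffalse : form S := Fex 0 (Fneg (Feq 0 0)).
Definition ftrue : form S := Fneg ffalse.

Lemma sat_ffalse (N : structure S) a : ~ sat N a ffalse.
Proof. intros [d H]. apply H; reflexivity. Qed.

Lemma sat_ftrue (N : structure S) a : sat N a ftrue.
Proof. exact (@sat_ffalse N a). Qed.

Lemma ftrue_closed z : ~ free z ftrue.
Proof. simpl. intros [H1 [H2|H2]]; congruence. Qed.

(* Atoms of n-ary symbols outside I are false in M_I; replacing them by [ffalse] gives a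
   sentence of the language of I, to which T0 applies. *)
Fixpoint prune (I : S -> Prop) (p : form S) : form S :=
  match p with
  | Fatom R vs => if excluded_middle_informative (ar R = n -> I R) then Fatom R vs else ffalse
  | Feq y z => Feq y z
  | Fneg q => Fneg (prune I q)
  | Fand q r => Fand (prune I q) (prune I r)
  | Fex y q => Fex y (prune I q)
  end.

Lemma free_prune I p z : free z (prune I p) -> free z p.
Proof.
  induction p; simpl; auto.
  - destruct (excluded_middle_informative _); simpl; auto. intros [H1 [H2|H2]]; congruence.
  - intros [|]; auto.
  - intros [? ?]; auto.
Qed.

Lemma atoms_prune I p R vs :
  In (R, vs) (atoms (prune I p)) -> (ar R = n -> I R) /\ In (R, vs) (atoms p).
Proof.
  induction p; simpl; auto.
  - destruct (excluded_middle_informative _); simpl; [|tauto].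
    intros [E|[]]. inversion E; subst; auto.
  - tauto.
  - intros H; apply in_app_or in H as [H|H];
      [destruct (IHp1 H)|destruct (IHp2 H)]; split; auto using in_or_app.
Qed.

Lemma in_lang_prune I (L : S -> Prop) p :
  in_lang ar L p -> in_lang ar (fun R => L R /\ (ar R = n -> I R)) (prune I p).
Proof.
  induction p; simpl; auto.
  - destruct (excluded_middle_informative _); simpl; tauto.
  - tauto.
Qed.

Lemma sat_prune I (N : structure S) p :
  (forall R l, I0 ar T0 n R -> ~ I R -> length l = ar R -> ~ rel N R l) ->
  in_lang ar (Sigma' ar T0 n) p -> forall a, sat N a p <-> sat N a (prune I p).
Proof.
  intros HN; induction p; simpl; intros Hl a.
  - destruct (excluded_middle_informative _) as [h|h]; simpl; [tauto|].
    split; [|intro H; destruct (sat_ffalse H)].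
    intro Hr. destruct Hl as [[HI0|Hne] Hlen].
    + exfalso. apply (HN s (map a l) HI0); [intro HI; apply h; auto|now rewrite length_map|exact Hr].
    + exfalso; apply h; intro; contradiction.
  - tauto.
  - rewrite IHp; tauto.
  - rewrite IHp1, IHp2; tauto.
  - split; intros [d Hd]; exists d; [rewrite <- IHp|rewrite IHp]; auto.
Qed.

Lemma sat_restrict_model I (p : form S) :
  (forall R vs, In (R, vs) (atoms p) -> ar R = n -> I R) ->
  forall a, sat (restrict_model I) a p <-> sat M a p.
Proof.
  intros H a. apply (sat_transport (restrict_model I) M (fun x => x) (fun x => x)); auto.
  intros R vs Hin l _. rewrite map_id. simpl. specialize (H R vs Hin). tauto.
Qed.

Lemma sat_T0 q : T0 q -> forall a, sat M a q.
Proof. intros Hq; apply HT in Hq; apply Hq. Qed.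

Lemma T0_exR R : I0 ar T0 n R -> T0 (exR ar R).
Proof.
  intros [_ Hne]. apply HT. split.
  - apply exR_sentence; auto.
  - apply Hne; auto. exact sat_T0.
Qed.

Lemma restrict_model_empty I R l :
  I0 ar T0 n R -> ~ I R -> length l = ar R -> ~ rel (restrict_model I) R l.
Proof. intros [HR _] HnI _ [_ H]. auto. Qed.

Lemma restrict_model_AxI I q : AxI ar T0 n I q -> forall a, sat (restrict_model I) a q.
Proof.
  intros [[[Hql _] Hq]|[l [Hl0 [HnI ->]]]] a.
  - apply sat_restrict_model.
    + intros R vs Hin Har.
      destruct (in_lang_atoms _ _ _ Hql R vs Hin) as [[h|h] _]; [auto|contradiction].
    + apply sat_T0; auto.
  - intro H. apply sat_exR_elim in H as [l' [Hlen H]].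
    exact (restrict_model_empty Hl0 HnI Hlen H).
Qed.

Lemma AxI_entails_of_restrict_model I p : sentence_in ar (Sigma' ar T0 n) p ->
  (forall a, sat (restrict_model I) a p) -> entails (AxI ar T0 n I) p.
Proof.
  intros [Hl Hc] HMI N HN HAx a.
  assert (Hemp : forall R l, I0 ar T0 n R -> ~ I R -> length l = ar R -> ~ rel N R l).
  { intros R l HR HnI Hlen Hr.
    apply (HAx (Fneg (exR ar R))) with a; [right; eauto|]. eapply sat_exR_intro; eauto. }
  apply (sat_prune I N p Hemp Hl). apply (HAx (prune I p)). left.
  assert (Hsl := in_lang_prune I _ _ Hl).
  assert (Hsc : forall z, ~ free z (prune I p)) by (intros z Hz; exact (Hc z (@free_prune I p z Hz))).
  split.
  - split; auto. apply in_lang_mono with (2 := Hsl). intros R [_ h]. unfold LangI.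
    destruct (classic (ar R = n)); auto.
  - apply HT. split; [split; auto; apply in_lang_mono with (2 := Hsl); auto|].
    intro b. apply (sat_restrict_model I (prune I p)).
    + intros R vs Hin. apply (atoms_prune I p R vs Hin).
    + apply (sat_prune I (restrict_model I) p (@restrict_model_empty I) Hl), HMI.
Qed.

Lemma Th_restrict_model I : ext_eq (Th ar (Sigma' ar T0 n) (restrict_model I)) (TI ar T0 n I).
Proof.
  intro p. split; intros [Hs H]; split; auto.
  - apply AxI_entails_of_restrict_model; auto.
  - apply H; [destruct HM as [m]; exact (inhabits m)|]. apply restrict_model_AxI.
Qed.


Section Copies.
Variable F : (S -> Prop) -> Prop.

Definition copy_index : Type := nat * {I | F I}.

Definition copies (k : copy_index) : structure S := restrict_model (proj1_sig (snd k)).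

Definition extra_index (J : S -> Prop) (o : option copy_index) : S -> Prop :=
  match o with None => J | Some k => proj1_sig (snd k) end.

Definition copies_with (J : S -> Prop) (o : option copy_index) : structure S :=
  restrict_model (extra_index J o).

(* Hilbert's hotel on the copies of [i]: the extra class goes to copy 0 of [i]
   and every copy of [i] moves up by one. *)
Definition shift_in (i : {I | F I}) (o : option copy_index) : copy_index :=
  match o with
  | None => (0, i)
  | Some (m, j) => if excluded_middle_informative (j = i) then (Datatypes.S m, j) else (m, j)
  end.

Definition shift_out (i : {I | F I}) (k : copy_index) : option copy_index :=
  let (m, j) := k in
  if excluded_middle_informative (j = i) then
    match m with 0 => None | Datatypes.S m' => Some (m', j) end
  else Some (m, j).

Lemma shift_inK i o : shift_out i (shift_in i o) = o.
Proof.
  destruct o as [[m j]|]; simpl.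
  - destruct (excluded_middle_informative (j = i)); simpl;
      destruct (excluded_middle_informative (j = i)); auto; contradiction.
  - destruct (excluded_middle_informative (i = i)); [auto|contradiction].
Qed.

Lemma shift_outK i k : shift_in i (shift_out i k) = k.
Proof.
  destruct k as [m j]; simpl.
  destruct (excluded_middle_informative (j = i)) as [e|e]; simpl.
  - destruct m; simpl; [now subst|].
    destruct (excluded_middle_informative (j = i)); [auto|contradiction].
  - destruct (excluded_middle_informative (j = i)); [contradiction|auto].
Qed.

Lemma index_shift_in i k : proj1_sig (snd (shift_in i (Some k))) = proj1_sig (snd k).
Proof.
  destruct k as [m j]; simpl.
  destruct (excluded_middle_informative (j = i)); auto.
Qed.

Definition base_symbols (p : form (option S)) : list S :=
  flat_map (fun at_ => match fst at_ with Some R => [R] | None => [] end) (atoms p).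

Lemma base_symbols_atoms p R vs : In (Some R, vs) (atoms p) -> In R (base_symbols p).
Proof. intro H. apply in_flat_map. exists (Some R, vs). simpl; auto. Qed.

Section Shift.
Variables (J : S -> Prop) (i : {I | F I}).

Let shift (x : dom (Ecomb (copies_with J))) : dom (Ecomb copies) :=
  existT _ (shift_in i (projT1 x)) (projT2 x).
Let unshift (x : dom (Ecomb copies)) : dom (Ecomb (copies_with J)) :=
  existT (fun o => dom (copies_with J o)) (shift_out i (projT1 x)) (projT2 x).

Lemma shiftK x : unshift (shift x) = x.
Proof. destruct x as [o y]. unfold shift, unshift; simpl. now rewrite shift_inK. Qed.

Lemma unshiftK x : shift (unshift x) = x.
Proof. destruct x as [k y]. unfold shift, unshift; simpl. now rewrite shift_outK. Qed.

Lemma rel_copies_shift R o l : (proj1_sig i R <-> J R) ->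
  (rel (copies_with J o) R l <-> rel (copies (shift_in i o)) R l).
Proof.
  intro HR. simpl.
  assert (E : extra_index J o R <-> proj1_sig (snd (shift_in i o)) R).
  { destruct o as [k|]; [rewrite index_shift_in|]; simpl; tauto. }
  rewrite E; tauto.
Qed.

Lemma sat_Ecomb_shift p : (forall R, In R (base_symbols p) -> (proj1_sig i R <-> J R)) ->
  forall a, sat (Ecomb (copies_with J)) a p <-> sat (Ecomb copies) (fun z => shift (a z)) p.
Proof.
  intros Hag a. apply (sat_transport _ _ shift unshift unshiftK shiftK p).
  intros [R|] vs Hin l _.
  - assert (HR := Hag R (@base_symbols_atoms p R vs Hin)). simpl. split.
    + intros [o [l' [-> H]]]. exists (shift_in i o), l'. rewrite map_map.
      split; [reflexivity|]. now apply rel_copies_shift.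
    + intros [k [l' [E H]]]. exists (shift_out i k), l'. split.
      * transitivity (map unshift (map shift l)).
        { rewrite map_map, (map_ext _ _ shiftK). symmetry; apply map_id. }
        etransitivity; [exact (f_equal (map unshift) E)|]. now rewrite map_map.
      * apply rel_copies_shift; auto. now rewrite shift_outK.
  - destruct l as [|x [|y [|z l]]]; simpl; try tauto. split; intro E; [now rewrite E|].
    destruct x as [ox x], y as [oy y]; simpl in *.
    now rewrite <- (shift_inK i ox), <- (shift_inK i oy), E.
Qed.

End Shift.

Section ExtraClass.
Variables (J : S -> Prop) (m0 : dom M).
Hypothesis Hn : 1 <= n.

Let D := Ecomb (copies_with J).
Let c : dom D := existT (fun o => dom (copies_with J o)) None m0.
Let embed (y : dom M) : dom (Eclass D c) := exist _ (existT _ None y) eq_refl.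

Lemma embedK (e : dom (Eclass D c)) : embed (projT2 (proj1_sig e)) = e.
Proof.
  destruct e as [[o y] pf]. apply sig_proj1_inj. simpl in *. now subst o.
Qed.

Lemma sat_extra_class p : sentence_in ar (Sigma' ar T0 n) p ->
  forall a, sat (restrict_model J) a p <-> sat (Eclass D c) (fun z => embed (a z)) p.
Proof.
  intros [Hl _] a.
  apply (sat_transport (restrict_model J) (Eclass D c) embed (fun e => projT2 (proj1_sig e))
           embedK (fun _ => eq_refl) p).
  intros R vs Hin l Hlen.
  destruct (in_lang_atoms _ _ _ Hl R vs Hin) as [HS Har].
  simpl. rewrite map_map. simpl. split.
  - intro H. exists None, l. auto.
  - intros [o [l' [E H]]]. destruct l as [|x l]; destruct l' as [|y l']; try discriminate.
    + assert (ar R <> n) by (simpl in Hlen; lia). simpl in H |- *. intuition.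
    + assert (Eh := f_equal (fun l => match l with [] => None | u :: _ => Some (projT1 u) end) E).
      simpl in Eh. injection Eh as <-.
      apply map_injective in E; [now rewrite E|].
      intros u v Huv; exact (inj_pairT2 _ _ _ _ _ Huv).
Qed.

Lemma Th_extra_class : ext_eq (TI ar T0 n J) (Th ar (Sigma' ar T0 n) (Eclass D c)).
Proof.
  intro p. rewrite <- (Th_restrict_model J p). split; intros [Hs Hp]; split; auto.
  - intro e. rewrite <- (sat_agree _ p (fun z => embed (projT2 (proj1_sig (e z))))).
    + apply sat_extra_class; auto.
    + intros z _. apply embedK.
  - intro a. apply (sat_extra_class Hs a), Hp.
Qed.

End ExtraClass.

Lemma elem_equiv_copies_with J : approximates F J ->
  elem_equiv (arE ar) (SigmaE ar T0 n) (Ecomb copies) (Ecomb (copies_with J)).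
Proof.
  intros HJ p _.
  destruct (HJ (base_symbols p)) as [I [HI Hag]].
  set (i := exist F I HI).
  split.
  - intros H a. apply (@sat_Ecomb_shift J i p Hag), H.
  - intros H b.
    rewrite <- (sat_agree (Ecomb copies) p
                  (fun z => existT (fun k => dom (copies k))
                              (shift_in i (shift_out i (projT1 (b z)))) (projT2 (b z)))).
    + apply (@sat_Ecomb_shift J i p Hag
               (fun z => existT (fun o => dom (copies_with J o)) (shift_out i (projT1 (b z)))
                                (projT2 (b z)))), H.
    + intros z _. destruct (b z) as [k y]. simpl. now rewrite shift_outK.
Qed.

Lemma ClE_of_approximates J : 1 <= n -> (exists I, F I) -> approximates F J ->
  ClE ar T0 n (TF ar T0 n F) (TI ar T0 n J).
Proof.
  intros Hn [I1 HI1] HJ. destruct HM as [m0].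
  exists copy_index, copies, (Ecomb (copies_with J)),
    (existT (fun o => dom (copies_with J o)) None m0).
  split; [exact (inhabits (0, exist _ I1 HI1))|].
  split; [intro k; exact (inhabits m0)|].
  split; [|split].
  - intro k. exists (TI ar T0 n (proj1_sig (snd k))). split.
    + exists (proj1_sig (snd k)). split; [exact (proj2_sig (snd k))|reflexivity].
    + apply Th_restrict_model.
  - now apply elem_equiv_copies_with.
  - now apply Th_extra_class.
Qed.

End Copies.

Section Diagram.
Variable J : S -> Prop.

Definition literal (R : S) : form S :=
  if excluded_middle_informative (I0 ar T0 n R) then
    (if excluded_middle_informative (J R) then exR ar R else Fneg (exR ar R))
  else ftrue.

Definition diagram (L : list S) : form S := fold_right (fun R acc => Fand (literal R) acc) ftrue L.

Lemma literal_sentence R : sentence_in ar (Sigma' ar T0 n) (literal R).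
Proof.
  unfold literal. destruct (excluded_middle_informative (I0 ar T0 n R)) as [h|h].
  - destruct (exR_sentence ar (Sigma' ar T0 n) R (or_introl h)) as [Hl Hc].
    destruct (excluded_middle_informative (J R)); split; auto.
  - split; [simpl; auto|apply ftrue_closed].
Qed.

Lemma diagram_sentence L : sentence_in ar (Sigma' ar T0 n) (diagram L).
Proof.
  induction L as [|R L [IHl IHc]]; [split; [simpl; auto|apply ftrue_closed]|].
  destruct (literal_sentence R) as [Hl Hc]. split; [simpl; auto|].
  intros z [H|H]; [exact (Hc z H)|exact (IHc z H)].
Qed.

Lemma diagram_atoms_nonnil L R vs : 1 <= n -> In (R, vs) (atoms (diagram L)) -> vs <> [].
Proof.
  intros Hn. induction L as [|R' L IH]; simpl; [tauto|].
  intro H. apply in_app_or in H as [H|H]; auto.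
  unfold literal in H. destruct (excluded_middle_informative (I0 ar T0 n R')) as [[Har _]|h];
    [|simpl in H; tauto].
  assert (Hat : In (R, vs) (atoms (exR ar R'))).
  { destruct (excluded_middle_informative (J R')); exact H. }
  unfold exR in Hat. rewrite atoms_ex_vars in Hat. destruct Hat as [E|[]].
  injection E as <- <-. rewrite Har. destruct n; [lia|discriminate].
Qed.

Lemma sat_diagram_literal (N : structure S) a L R :
  sat N a (diagram L) -> In R L -> sat N a (literal R).
Proof.
  induction L as [|R' L IH]; simpl; [tauto|]. intros [H1 H2] [<-|Hin]; auto.
Qed.

Lemma TI_diagram L : TI ar T0 n J (diagram L).
Proof.
  split; [apply diagram_sentence|]. intros N HN HAx a.
  induction L as [|R L IH]; [apply sat_ftrue|]. split; auto.
  unfold literal. destruct (excluded_middle_informative (I0 ar T0 n R)) as [h|h];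
    [destruct (excluded_middle_informative (J R))|].
  - apply HAx. left. split; [apply exR_sentence; now left|now apply T0_exR].
  - apply HAx. right. exists R; auto.
  - apply sat_ftrue.
Qed.

Lemma literal_agree (N : structure S) I R b :
  subset I (I0 ar T0 n) -> subset J (I0 ar T0 n) ->
  ext_eq (Th ar (Sigma' ar T0 n) N) (TI ar T0 n I) ->
  sat N b (literal R) -> (I R <-> J R).
Proof.
  intros HI HJ HTh. unfold literal.
  destruct (excluded_middle_informative (I0 ar T0 n R)) as [h|h];
    [destruct (excluded_middle_informative (J R)) as [j|j]|].
  - intro Hs. split; auto. intros _. apply NNPP; intro nI.
    assert (T : TI ar T0 n I (Fneg (exR ar R))).
    { split; [destruct (exR_sentence ar (Sigma' ar T0 n) R (or_introl h)); split; auto|].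
      intros N' HN' HAx a. apply HAx. right. exists R; auto. }
    apply HTh in T as [_ T]. exact (T b Hs).
  - intro Hs. split; [|tauto]. intro iR. exfalso.
    assert (T : TI ar T0 n I (exR ar R)).
    { split; [apply exR_sentence; now left|].
      intros N' HN' HAx a. apply HAx. left.
      split; [apply exR_sentence; now left|now apply T0_exR]. }
    apply HTh in T as [_ T]. exact (Hs (T b)).
  - intros _. split; intro H; exfalso; apply h; auto.
Qed.

End Diagram.

Lemma approximates_of_ClE F J : 1 <= n ->
  (forall I, F I -> subset I (I0 ar T0 n)) -> subset J (I0 ar T0 n) ->
  ClE ar T0 n (TF ar T0 n F) (TI ar T0 n J) -> approximates F J.
Proof.
  intros Hn HF HJ [K [A [D [c [HK [HA [HTh [Heq HJc]]]]]]]] L.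
  destruct (@Eclass_sentence_component S ar T0 n K A D HK HA Heq c (diagram J L))
    as [k [b Hk]].
  - apply diagram_sentence.
  - intros R vs. now apply diagram_atoms_nonnil.
  - exact (proj2 (proj1 (HJc _) (TI_diagram J L))).
  - destruct (HTh k) as [T' [[I [HI ->]] HT']]. exists I. split; auto. intros R HR.
    apply (@literal_agree J (A k) I R b (HF I HI) HJ HT'). eapply sat_diagram_literal; eauto.
Qed.
End Models.

Theorem corollary4p7 (S : Type) (ar : S -> nat) (T0 : form S -> Prop) (n : nat)
  (HT0 : complete_theory ar (fun _ => True) T0) (HLU : LU ar T0)
  (Hn : 1 <= n) (HI0 : infinite (I0 ar T0 n))
  (F : (S -> Prop) -> Prop)
  (HFidx : forall I, F I -> is_index ar T0 n I)
  (HFinf : infinite_family F)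
  (HFlin : forall I1 I2, F I1 -> F I2 -> subset I1 I2 \/ subset I2 I1)
  (HFgap : forall I1 I2, F I1 -> F I2 -> subset I1 I2 -> ~ subset I2 I1 ->
             infinite (setD I2 I1))
  (J : S -> Prop) (HJ : is_index ar T0 n J)
  (HJnot : ~ (exists I, F I /\ ext_eq (TI ar T0 n I) (TI ar T0 n J))) :
  ClE ar T0 n (TF ar T0 n F) (TI ar T0 n J) <->
  exists F' : (S -> Prop) -> Prop,
    subset F' F /\ infinite_family F' /\ (upper_acc F' J \/ lower_acc F' J).
Proof.
  destruct HT0 as [M [HM HT]].
  assert (HJnot' : ~ (exists I, F I /\ ext_eq I J)).
  { intros [I [HI E]]. apply HJnot. exists I. split; auto. now apply TI_ext. }
  assert (HJne : exists x, J x) by (destruct (proj1 (proj2 HJ) []) as [x [Jx _]]; eauto).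
  split.
  - intro Hcl.
    assert (Happrox : approximates F J)
      by exact (approximates_of_ClE HM HT Hn (fun I HI => proj1 (HFidx I HI)) (proj1 HJ) Hcl).
    exact (approximates_accumulation HFlin Happrox HJnot' HJne).
  - intros [F' [HF' [Hinf Hacc]]].
    assert (HF'chain : chain F') by exact (chain_sub HFlin HF').
    assert (HF'ne : exists I, F' I) by (destruct (Hinf []) as [I [HI _]]; eauto).
    apply (ClE_of_approximates T0 HM HT Hn).
    + destruct HF'ne as [I HI]. eauto.
    + apply (approximates_sub HF'). destruct Hacc as [Hacc|Hacc].
      * exact (upper_acc_approximates HF'chain HF'ne Hacc).
      * exact (lower_acc_approximates HF'chain HF'ne Hacc).
Qed.
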